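(* Let $\alpha,\beta,\mu,\nu>0$, $0<z\le1$, and let $\mathbf a=(a_n)_{n\ge1}$ be a sequence of positive numbers with $a_n\to\infty$ such that $\zeta_{\mu,\nu}(\alpha,\beta,z)<\infty$. Then for all $r>0$, $$2\zeta_{\mu,\nu}(\alpha,\beta,z)\exp\Big\{-\mu\,\frac{\zeta_{\mu+1,\nu}(\alpha,\beta,z)}{\zeta_{\mu,\nu}(\alpha,\beta,z)}\,r^2\Big\}\le S^{(\alpha,\beta)}_{\mu,\nu}(r,\mathbf a;z).$$
   Context: $S_{\mu,\nu}^{(\alpha,\beta)}(r,\mathbf a;z)=\sum_{n=1}^\infty \frac{2a_n^{\beta}(\nu)_n z^n}{(a_n^{\alpha}+r^2)^{\mu}\,n!}$, $(\nu)_n=\Gamma(\nu+n)/\Gamma(\nu)$, and $\zeta_{\mu,\nu}(\alpha,\beta,z)=\sum_{n=1}^\infty\frac{(\nu)_n z^n}{n!\,a_n^{\alpha\mu-\beta}}$. *)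

From Stdlib Require Import Reals Lra Arith Factorial.
Open Scope R_scope.

(* Pochhammer symbol (nu)_n = Gamma(nu+n)/Gamma(nu) = nu (nu+1) ... (nu+n-1). *)
Fixpoint poch (nu : R) (n : nat) : R :=
  match n with
  | O => 1
  | S k => poch nu k * (nu + INR k)
  end.

(* n-th term (n >= 1) of zeta_{mu,nu}(alpha,beta,z):
   (nu)_n z^n / (n! a_n^(alpha mu - beta)). *)
Definition zeta_term (mu nu alpha beta z : R) (a : nat -> R) (n : nat) : R :=
  poch nu n * z ^ n / (INR (fact n) * Rpower (a n) (alpha * mu - beta)).

(* n-th term (n >= 1) of S_{mu,nu}^{(alpha,beta)}(r, a; z). *)
Definition S_term (mu nu alpha beta r z : R) (a : nat -> R) (n : nat) : R :=
  2 * Rpower (a n) beta * poch nu n * z ^ n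
    / (Rpower (Rpower (a n) alpha + r ^ 2) mu * INR (fact n)).

Definition sum_from1 (f : nat -> R) (l : R) : Prop :=
  infinite_sum (fun k => f (S k)) l.

(* Termwise, (a^alpha + r^2)^(-mu) >= a^(-alpha mu) exp(-mu r^2 / a^alpha), so
   S >= sum_n 2 w_n exp(y_n) with weights w_n = zeta-terms and exponents
   y_n = -mu r^2 / a_n^alpha.  Since w_n y_n is -mu r^2 times a
   zeta_{mu+1,nu}-term, Jensen's inequality for exp (the tangent line of exp
   at the weighted mean of the y_n) gives the claim.  The growth of a_n only
   serves to make zeta_{mu+1,nu} converge. *)
From Stdlib Require Import Reals Lra Lia Arith.
Open Scope R_scope.

Lemma Un_cv_const (c : R) : Un_cv (fun _ => c) c.
Proof.
  intros e He; exists 0%nat; intros n _.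
  unfold Rdist; rewrite Rminus_diag, Rabs_R0; lra.
Qed.

Lemma infinite_sum_ext (f g : nat -> R) (l : R) :
  (forall k, f k = g k) -> infinite_sum f l -> infinite_sum g l.
Proof.
  intros Efg Hf; apply Un_cv_ext with (fun N => sum_f_R0 f N); [|exact Hf].
  intros N; apply sum_eq; intros k _; apply Efg.
Qed.

Lemma infinite_sum_scal (c : R) (f : nat -> R) (l : R) :
  infinite_sum f l -> infinite_sum (fun k => c * f k) (c * l).
Proof.
  intros Hf; apply Un_cv_ext with (fun N => c * sum_f_R0 f N).
  - intros N; rewrite scal_sum; apply sum_eq; intros k _; ring.
  - apply CV_mult; [apply Un_cv_const | exact Hf].
Qed.

Lemma infinite_sum_plus (f g : nat -> R) (lf lg : R) :
  infinite_sum f lf -> infinite_sum g lg ->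
  infinite_sum (fun k => f k + g k) (lf + lg).
Proof.
  intros Hf Hg; apply Un_cv_ext with (fun N => sum_f_R0 f N + sum_f_R0 g N).
  - intros N; symmetry; apply sum_plus.
  - apply CV_plus; assumption.
Qed.

Lemma infinite_sum_pos (f : nat -> R) (l : R) :
  (forall k, 0 < f k) -> infinite_sum f l -> 0 < l.
Proof.
  intros Hpos Hf.
  apply Rlt_le_trans with (sum_f_R0 f 0); [exact (Hpos 0%nat)|].
  apply sum_incr; [exact Hf | intros k; left; apply Hpos].
Qed.

Lemma infinite_sum_comparison (f g : nat -> R) (lg : R) :
  (forall k, 0 <= f k <= g k) -> infinite_sum g lg -> exists lf, infinite_sum f lf.
Proof.
  intros Hfg Hg.
  destruct (Rseries_CV_comp f g Hfg (exist _ lg Hg)) as [lf Hf].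
  now exists lf.
Qed.

(* The tangent line of exp at c = Y / W lies below exp; summing it against the
   weights w turns the mean of the exponents into the equality case. *)
Lemma infinite_sum_exp_jensen (w y t : nat -> R) (W Y T : R) :
  (forall k, 0 <= w k) -> (forall k, w k * exp (y k) <= t k) ->
  infinite_sum w W -> infinite_sum (fun k => w k * y k) Y ->
  infinite_sum t T -> W <> 0 ->
  W * exp (Y / W) <= T.
Proof.
  intros Hw Hwt HW HY HT HW0.
  set (c := Y / W).
  set (g := fun k => exp c * (w k + w k * y k + - c * w k)).
  assert (Hg : infinite_sum g (exp c * (W + Y + - c * W))).
  { apply infinite_sum_scal, infinite_sum_plus;
      [apply infinite_sum_plus|apply infinite_sum_scal]; assumption. }
  assert (Hgt : forall k, g k <= t k).
  { intros k; apply Rle_trans with (w k * exp (y k)); [|apply Hwt].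
    assert (Htangent : exp c * (1 + (y k - c)) <= exp (y k)).
    { replace (y k) with (c + (y k - c)) at 2 by ring; rewrite exp_plus.
      apply Rmult_le_compat_l; [left; apply exp_pos | apply exp_ineq1_le]. }
    unfold g; replace (exp c * (w k + w k * y k + - c * w k))
      with (w k * (exp c * (1 + (y k - c)))) by ring.
    apply Rmult_le_compat_l; [apply Hw | exact Htangent]. }
  replace (W * exp c) with (exp c * (W + Y + - c * W)) by (unfold c; field; exact HW0).
  apply Rle_cv_lim with (sum_f_R0 g) (sum_f_R0 t); [|exact Hg|exact HT].
  intros N; apply sum_Rle; intros k _; apply Hgt.
Qed.

Lemma cv_infty_pos_bounded_below (b : nat -> R) :
  (forall n, 0 < b n) -> cv_infty b -> exists m, 0 < m /\ forall n, m <= b n.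
Proof.
  intros Hpos Hinf.
  assert (Hinit : forall N, exists m, 0 < m /\ forall n, (n <= N)%nat -> m <= b n).
  { induction N as [|N [m [Hm Hmb]]].
    - exists (b 0%nat); split; [apply Hpos|].
      intros n Hn; replace n with 0%nat by lia; lra.
    - exists (Rmin m (b (S N))); split; [apply Rmin_pos; [exact Hm | apply Hpos]|].
      intros n Hn; destruct (Nat.eq_dec n (S N)) as [->|Hne]; [apply Rmin_r|].
      apply Rle_trans with m; [apply Rmin_l | apply Hmb; lia]. }
  destruct (Hinf 1) as [N HN]; destruct (Hinit N) as [m [Hm Hmb]].
  exists (Rmin m 1); split; [apply Rmin_pos; lra|].
  intros n; destruct (le_lt_dec n N) as [Hn|Hn].
  - apply Rle_trans with m; [apply Rmin_l | apply Hmb, Hn].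
  - apply Rle_trans with 1; [apply Rmin_r | left; apply HN; lia].
Qed.

Lemma Rpower_pos (x y : R) : 0 < Rpower x y.
Proof. apply exp_pos. Qed.

Lemma Rpower_exp (t y : R) : Rpower (exp t) y = exp (y * t).
Proof. unfold Rpower; now rewrite ln_exp. Qed.

Lemma Rpower_add_le (A x mu : R) :
  0 < A -> 0 <= x -> 0 <= mu -> Rpower (A + x) mu <= Rpower A mu * exp (mu * (x / A)).
Proof.
  intros HA Hx Hmu.
  assert (HxA : 0 <= x / A).
  { unfold Rdiv; apply Rmult_le_pos; [lra | left; apply Rinv_0_lt_compat, HA]. }
  replace (A + x) with (A * (1 + x / A)) by (field; lra).
  rewrite <- Rpower_mult_distr, <- Rpower_exp by lra.
  apply Rmult_le_compat_l; [left; apply Rpower_pos|].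
  apply Rle_Rpower_l; [exact Hmu | split; [lra | apply exp_ineq1_le]].
Qed.

Lemma poch_pos (nu : R) (n : nat) : 0 < nu -> 0 < poch nu n.
Proof.
  intros Hnu; induction n as [|n IHn]; simpl; [lra|].
  apply Rmult_lt_0_compat; [exact IHn | pose proof (pos_INR n); lra].
Qed.

Section Terms.

Variables (mu nu alpha beta z r : R) (a : nat -> R).

Lemma zeta_term_pos (n : nat) :
  0 < nu -> 0 < z -> 0 < zeta_term mu nu alpha beta z a n.
Proof.
  intros Hnu Hz; unfold zeta_term.
  apply Rdiv_lt_0_compat.
  - apply Rmult_lt_0_compat; [apply poch_pos, Hnu | apply pow_lt, Hz].
  - apply Rmult_lt_0_compat; [apply INR_fact_lt_0 | apply Rpower_pos].
Qed.

Lemma zeta_term_succ_mu (n : nat) :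
  zeta_term (mu + 1) nu alpha beta z a n
  = zeta_term mu nu alpha beta z a n / Rpower (a n) alpha.
Proof.
  unfold zeta_term.
  replace (alpha * (mu + 1) - beta) with (alpha * mu - beta + alpha) by ring.
  rewrite Rpower_plus; field.
  pose proof (INR_fact_lt_0 n); pose proof (Rpower_pos (a n) alpha);
    pose proof (Rpower_pos (a n) (alpha * mu - beta)); repeat split; lra.
Qed.

Lemma S_term_zeta_term (n : nat) :
  let A := Rpower (a n) alpha in
  S_term mu nu alpha beta r z a n
  = 2 * zeta_term mu nu alpha beta z a n * (Rpower A mu / Rpower (A + r ^ 2) mu).
Proof.
  intros A; unfold S_term, zeta_term, A.
  rewrite Rpower_mult.
  replace (Rpower (a n) (alpha * mu))
    with (Rpower (a n) (alpha * mu - beta) * Rpower (a n) beta)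
    by (rewrite <- Rpower_plus; f_equal; ring).
  field.
  pose proof (INR_fact_lt_0 n); pose proof (Rpower_pos (a n) (alpha * mu - beta));
    pose proof (Rpower_pos (Rpower (a n) alpha + r ^ 2) mu); repeat split; lra.
Qed.

Hypotheses (Hmu : 0 <= mu) (Hnu : 0 < nu) (Hz : 0 < z).

Lemma S_term_nonneg_le (n : nat) :
  0 <= S_term mu nu alpha beta r z a n <= 2 * zeta_term mu nu alpha beta z a n.
Proof.
  rewrite S_term_zeta_term.
  set (A := Rpower (a n) alpha).
  pose proof (zeta_term_pos n Hnu Hz) as Hw.
  assert (HA : 0 < A) by apply Rpower_pos.
  assert (Hratio : 0 < Rpower A mu / Rpower (A + r ^ 2) mu <= 1).
  { split; [apply Rdiv_lt_0_compat; apply Rpower_pos|].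
    apply Rmult_le_reg_r with (Rpower (A + r ^ 2) mu); [apply Rpower_pos|].
    unfold Rdiv; rewrite Rmult_assoc, Rinv_l, Rmult_1_l, Rmult_1_r
      by apply Rgt_not_eq, Rpower_pos.
    apply Rle_Rpower_l; [exact Hmu | pose proof (pow2_ge_0 r); lra]. }
  split; [apply Rmult_le_pos; lra|].
  rewrite <- (Rmult_1_r (2 * _)) at 2; apply Rmult_le_compat_l; lra.
Qed.

Lemma S_term_ge_exp (n : nat) :
  2 * zeta_term mu nu alpha beta z a n * exp (- mu * r ^ 2 / Rpower (a n) alpha)
  <= S_term mu nu alpha beta r z a n.
Proof.
  rewrite S_term_zeta_term.
  set (A := Rpower (a n) alpha).
  pose proof (zeta_term_pos n Hnu Hz) as Hw.
  assert (HA : 0 < A) by apply Rpower_pos.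
  apply Rmult_le_compat_l; [lra|].
  replace (- mu * r ^ 2 / A) with (- (mu * (r ^ 2 / A))) by (field; lra).
  rewrite exp_Ropp.
  apply Rmult_le_reg_r with (Rpower (A + r ^ 2) mu * exp (mu * (r ^ 2 / A)));
    [apply Rmult_lt_0_compat; [apply Rpower_pos | apply exp_pos]|].
  replace (/ exp (mu * (r ^ 2 / A)) * (Rpower (A + r ^ 2) mu * exp (mu * (r ^ 2 / A))))
    with (Rpower (A + r ^ 2) mu) by (field; apply Rgt_not_eq, exp_pos).
  replace (Rpower A mu / Rpower (A + r ^ 2) mu
           * (Rpower (A + r ^ 2) mu * exp (mu * (r ^ 2 / A))))
    with (Rpower A mu * exp (mu * (r ^ 2 / A))) by (field; apply Rgt_not_eq, Rpower_pos).
  apply Rpower_add_le; [exact HA | apply pow2_ge_0 | exact Hmu].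
Qed.

End Terms.

Lemma sum_from1_zeta_term_succ_mu (mu nu alpha beta z : R) (a : nat -> R) (Z : R) :
  0 <= alpha -> 0 < nu -> 0 < z ->
  (forall n, (1 <= n)%nat -> 0 < a n) -> cv_infty a ->
  sum_from1 (zeta_term mu nu alpha beta z a) Z ->
  exists Z1, sum_from1 (zeta_term (mu + 1) nu alpha beta z a) Z1.
Proof.
  intros Halpha Hnu Hz Hapos Hainf HZ.
  destruct (cv_infty_pos_bounded_below (fun k => a (S k))) as [m [Hm Hma]].
  { intros k; apply Hapos; lia. }
  { intros M; destruct (Hainf M) as [N HN]; exists N; intros n Hn; apply HN; lia. }
  assert (Hinv : forall k, / Rpower (a (S k)) alpha <= / Rpower m alpha).
  { intros k; apply Rinv_le_contravar; [apply Rpower_pos|].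
    apply Rle_Rpower_l; [exact Halpha | split; [exact Hm | apply Hma]]. }
  apply (infinite_sum_comparison _
           (fun k => / Rpower m alpha * zeta_term mu nu alpha beta z a (S k)))
    with (/ Rpower m alpha * Z); [intros k | exact (infinite_sum_scal _ _ _ HZ)].
  rewrite zeta_term_succ_mu; pose proof (zeta_term_pos mu nu alpha beta z a (S k) Hnu Hz).
  split.
  - left; apply Rdiv_lt_0_compat; [lra | apply Rpower_pos].
  - unfold Rdiv; rewrite (Rmult_comm (/ Rpower m alpha)).
    apply Rmult_le_compat_l; [lra | apply Hinv].
Qed.

Theorem mainTheorem8 (alpha beta mu nu z : R) (a : nat -> R) (Z : R)
  (Halpha : 0 < alpha) (Hbeta : 0 < beta) (Hmu : 0 < mu) (Hnu : 0 < nu)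
  (Hz0 : 0 < z) (Hz1 : z <= 1)
  (Hapos : forall n, (1 <= n)%nat -> 0 < a n)
  (Hainf : cv_infty a)
  (HZ : sum_from1 (zeta_term mu nu alpha beta z a) Z) :
  forall r : R, 0 < r ->
    exists Z1 Sv : R,
      sum_from1 (zeta_term (mu + 1) nu alpha beta z a) Z1 /\
      sum_from1 (S_term mu nu alpha beta r z a) Sv /\
      2 * Z * exp (- mu * (Z1 / Z) * r ^ 2) <= Sv.
Proof.
  intros r _.
  pose proof (fun n => zeta_term_pos mu nu alpha beta z a n Hnu Hz0) as Hw.
  destruct (sum_from1_zeta_term_succ_mu mu nu alpha beta z a Z
              (Rlt_le _ _ Halpha) Hnu Hz0 Hapos Hainf HZ) as [Z1 HZ1].
  destruct (infinite_sum_comparison (fun k => S_term mu nu alpha beta r z a (S k)) _ _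
              (fun k => S_term_nonneg_le mu nu alpha beta z r a (Rlt_le _ _ Hmu) Hnu Hz0 (S k))
              (infinite_sum_scal 2 _ _ HZ)) as [Sv HSv].
  exists Z1, Sv; split; [exact HZ1 | split; [exact HSv|]].
  assert (HZpos : 0 < Z) by exact (infinite_sum_pos _ _ (fun k => Hw (S k)) HZ).
  replace (2 * Z * exp (- mu * (Z1 / Z) * r ^ 2))
    with (2 * Z * exp (- mu * r ^ 2 * (2 * Z1) / (2 * Z))) by (do 2 f_equal; field; lra).
  apply (infinite_sum_exp_jensen (fun k => 2 * zeta_term mu nu alpha beta z a (S k))
           (fun k => - mu * r ^ 2 / Rpower (a (S k)) alpha)
           (fun k => S_term mu nu alpha beta r z a (S k))).
  - intros k; left; apply Rmult_lt_0_compat; [lra | apply Hw].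
  - intros k; apply S_term_ge_exp; lra.
  - exact (infinite_sum_scal 2 _ _ HZ).
  - apply infinite_sum_ext with
      (fun k => - mu * r ^ 2 * 2 * zeta_term (mu + 1) nu alpha beta z a (S k)).
    + intros k; rewrite zeta_term_succ_mu; field; apply Rgt_not_eq, Rpower_pos.
    + replace (- mu * r ^ 2 * (2 * Z1)) with (- mu * r ^ 2 * 2 * Z1) by ring.
      exact (infinite_sum_scal _ _ _ HZ1).
  - exact HSv.
  - lra.
Qed.
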